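(* Let $K\ge2$, $\mathcal{M}=\mathcal{L}^K$, and for each $j$ let $\mathcal{A}_j=\{\nu\in\mathcal{M}:c_\pi(\nu_j)<c_\pi(\nu_i)\ \forall i\ne j\}$ and $\mathcal{A}_j^c=\mathcal{M}\setminus\mathcal{A}_j$. Let $\mu\in\mathcal{A}_1$ and $t\in\Sigma_K$. Then \[\inf_{\nu\in\mathcal{A}_1^c}\sum_{a=1}^K t_a\mathrm{KL}(\mu_a,\nu_a)=\min_{j\ne1}\ \inf_{x\le y}\big\{t_1\mathrm{KL}^U_{\inf}(\mu_1,y)+t_j\mathrm{KL}^L_{\inf}(\mu_j,x)\big\},\] and hence $V(\mu):=\sup_{t\in\Sigma_K}\inf_{\nu\in\mathcal{A}_1^c}\sum_a t_a\mathrm{KL}(\mu_a,\nu_a)=\sup_{t\in\Sigma_K}\min_{j\ne1}\inf_{x\le y}\{t_1\mathrm{KL}^U_{\inf}(\mu_1,y)+t_j\mathrm{KL}^L_{\inf}(\mu_j,x)\}$.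
   Context: $\pi\in(0,1)$, $\epsilon>0$, $B>0$. $\mathcal{L}=\{\eta\in\mathcal{P}(\mathbb{R}):\mathbb{E}_\eta|X|^{1+\epsilon}\le B\}$. $F_\eta(x)=\eta((-\infty,x])$, $x_\pi(\eta)=\min\{z:F_\eta(z)\ge\pi\}$, $c_\pi(\eta)=\frac{F_\eta(x_\pi(\eta))-\pi}{1-\pi}x_\pi(\eta)+\frac{1}{1-\pi}\int_{(x_\pi(\eta),\infty)}y\,dF_\eta(y)$. $\Sigma_K$ is the probability simplex in $\mathbb{R}^K$. $\mathrm{KL}(\eta,\kappa)=\int\log\frac{d\eta}{d\kappa}d\eta$ if $\eta\ll\kappa$, else $+\infty$. $\mathrm{KL}^U_{\inf}(\eta,x)=\inf\{\mathrm{KL}(\eta,\kappa):\kappa\in\mathcal{L},c_\pi(\kappa)\ge x\}$, $\mathrm{KL}^L_{\inf}(\eta,x)=\inf\{\mathrm{KL}(\eta,\kappa):\kappa\in\mathcal{L},c_\pi(\kappa)\le x\}$. *)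

From HB Require Import structures.
From mathcomp Require Import all_boot all_order all_algebra.
From mathcomp Require Import all_classical all_reals all_analysis.
Set Implicit Arguments. Unset Strict Implicit. Unset Printing Implicit Defensive.
Import Order.TTheory GRing.Theory Num.Theory.
Import numFieldNormedType.Exports.
Local Open Scope classical_set_scope.
Local Open Scope ring_scope.

Section defs.
Variable R : realType.

Notation law := (probability R R).

Definition inL (eps B : R) (eta : law) : Prop :=
  (\int[eta]_x (`|x| `^ (1 + eps))%:E <= B%:E)%E.

Definition cdf (eta : law) (x : R) : R := fine (eta [set` `]-oo, x]]).

(* x_pi(eta) = min { z : F_eta(z) >= pi } (the minimum is attained by
   right-continuity of F_eta, so it equals the infimum) *)
Definition quant (pi : R) (eta : law) : R := inf [set z | pi <= cdf eta z].

Definition cvar (pi : R) (eta : law) : \bar R :=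
  let q := quant pi eta in
  (((cdf eta q - pi) / (1 - pi) * q)%:E
   + (1 - pi)^-1%:E * \int[eta]_(y in [set` `]q, +oo[]) y%:E)%E.

Definition KL (eta kappa : law) : \bar R :=
  if pselect (eta `<< kappa) is left _ then
    (\int[eta]_x (ln (fine (Radon_Nikodym (charge_of_finite_measure eta) kappa x)))%:E)%E
  else +oo%E.

Definition KLinfU (pi eps B : R) (eta : law) (x : R) : \bar R :=
  ereal_inf [set KL eta kappa | kappa in [set k | inL eps B k /\ (x%:E <= cvar pi k)%E]].

Definition KLinfL (pi eps B : R) (eta : law) (x : R) : \bar R :=
  ereal_inf [set KL eta kappa | kappa in [set k | inL eps B k /\ (cvar pi k <= x%:E)%E]].

Definition inM (eps B : R) (K : nat) (nu : 'I_K -> law) : Prop :=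
  forall i, inL eps B (nu i).

Definition inA (pi eps B : R) (K : nat) (j : 'I_K) (nu : 'I_K -> law) : Prop :=
  inM eps B nu /\ forall i, i != j -> (cvar pi (nu j) < cvar pi (nu i))%E.

Definition inAc (pi eps B : R) (K : nat) (j : 'I_K) (nu : 'I_K -> law) : Prop :=
  inM eps B nu /\ ~ inA pi eps B j nu.

Definition simplex (K : nat) (t : 'I_K -> R) : Prop :=
  (forall i, 0 <= t i) /\ \sum_(i < K) t i = 1.

(* inf_{nu in A_1^c} sum_a t_a KL(mu_a, nu_a)   (index 1 is ord0) *)
Definition lhs_val (pi eps B : R) (n : nat) (mu : 'I_n.+2 -> law)
    (t : 'I_n.+2 -> R) : \bar R :=
  ereal_inf [set (\sum_(a < n.+2) (t a)%:E * KL (mu a) (nu a))%E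
            | nu in [set nu | inAc pi eps B ord0 nu]].

Definition rhs_val (pi eps B : R) (n : nat) (mu : 'I_n.+2 -> law)
    (t : 'I_n.+2 -> R) : \bar R :=
  (\big[Order.min/+oo]_(j < n.+2 | j != ord0)
     ereal_inf [set ((t ord0)%:E * KLinfU pi eps B (mu ord0) xy.2
                     + (t j)%:E * KLinfL pi eps B (mu j) xy.1)
               | xy in [set xy : R * R | (xy.1 <= xy.2)%R]])%E.

End defs.

From HB Require Import structures.
From mathcomp Require Import all_boot all_order all_algebra.
From mathcomp Require Import all_classical all_reals all_analysis.
From mathcomp Require Import lra measurable_realfun.
Import Order.TTheory GRing.Theory Num.Theory.
Local Open Scope classical_set_scope.
Local Open Scope ring_scope.

(* If nu lies outside A_1, some arm j <> 1 has c_pi(nu_j) <= c_pi(nu_1).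
   As KL >= 0 and KL(mu_a, mu_a) = 0, only arms 1 and j matter, and with the
   real numbers x = c_pi(nu_j) <= y = c_pi(nu_1) (finite thanks to the moment
   bound defining L) their weighted divergences dominate
   t_1 KL^U_inf(mu_1, y) + t_j KL^L_inf(mu_j, x).  Conversely, laws kappa_1,
   kappa_j admissible for these two infima, put into arms 1 and j of mu, give
   a bandit outside A_1; taking infima over kappa_1 and kappa_j bounds the left
   side by the right one.  Nonnegativity of KL is Gibbs' inequality, obtained
   by integrating u ln u >= u - 1 for the density u = d eta / d kappa. *)

Section ln_bounds.
Variable R : realType.
Implicit Type u : R.

Lemma subr1_le_mul_ln u : 0 <= u -> u - 1 <= u * ln u.
Proof.
rewrite le_eqVlt => /predU1P[<-|u_gt0]; first by rewrite mul0r; lra.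
have uV_gt0 : 0 < u^-1 by rewrite invr_gt0.
have := @le_ln1Dx _ (u^-1 - 1); rewrite [1 + _]addrC subrK lnV ?posrE //.
move=> /(_ ltac:(lra)) /(ler_wpM2l (ltW u_gt0)).
by rewrite mulrBr mulfV ?gt_eqF // mulr1 mulrN; lra.
Qed.

Lemma mul_ln_negpart_le1 u : 0 <= u -> u * Num.max (- ln u) 0 <= 1.
Proof.
move=> u_ge0; have := subr1_le_mul_ln _ u_ge0.
by rewrite /Num.max; case: ifPn => _; nra.
Qed.

Lemma mul_ln_parts_le u : 0 <= u ->
  u + u * Num.max (- ln u) 0 <= u * Num.max (ln u) 0 + 1.
Proof.
move=> u_ge0; have := subr1_le_mul_ln _ u_ge0.
by rewrite /Num.max; do 2 case: ifPn; rewrite ?ltNge ?negbK; nra.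
Qed.

End ln_bounds.

Section KL_dominated.
Variable R : realType.
Variables eta kappa : probability R R.
Hypothesis eta_kappa : eta `<< kappa.
Local Open Scope ereal_scope.

(* Unlike the density used in [KL], this version of d eta / d kappa is
   nonnegative and finite everywhere, not only almost everywhere. *)
Let f := Radon_Nikodym_SigmaFinite.f eta kappa.
Let g x := fine (f x).
Let h := @ln R \o g.

Let fE x : f x = (g x)%:E.
Proof. by rewrite /g fineK // Radon_Nikodym_SigmaFinite.f_fin_num. Qed.

Let g_ge0 x : (0 <= g x)%R.
Proof. by rewrite /g fine_ge0 // Radon_Nikodym_SigmaFinite.f_ge0. Qed.

Let measurable_g : measurable_fun setT g.
Proof.
apply: measurableT_comp => //; apply: measurable_int.
exact: Radon_Nikodym_SigmaFinite.f_integrable.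
Qed.

Let measurable_h : measurable_fun setT h.
Proof. exact: measurableT_comp (@measurable_ln R) measurable_g. Qed.

Lemma KL_densityE : KL eta kappa = \int[eta]_x (h x)%:E.
Proof.
rewrite /KL; case: pselect => // _.
apply: ae_eq_integral => //.
- apply/measurable_EFinP; apply: measurableT_comp => //.
  by apply: measurableT_comp => //; exact: fine_measurable.
- exact/measurable_EFinP.
apply: (null_dominates_ae_eq measurableT eta_kappa).
apply: filterS (ae_eq_Radon_Nikodym_SigmaFinite eta_kappa measurableT).
by move=> x fx /fx; rewrite /h /g /= => <-.
Qed.

Lemma integral_density_mul (phi : R -> R) : measurable_fun setT phi ->
  (forall x, (0 <= phi x)%R) ->
  \int[kappa]_x (g x * phi x)%:E = \int[eta]_x (phi x)%:E.
Proof.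
move=> mphi phi_ge0.
rewrite -(Radon_Nikodym_SigmaFinite.change_of_variables eta_kappa) //.
  by apply: eq_integral => x _; rewrite -/f fE -EFinM mulrC.
exact/measurable_EFinP.
Qed.

Let integral1 : \int[kappa]_x cst 1 x = 1.
Proof. by rewrite integral_cst // mul1e; apply: probability_setT. Qed.

Lemma integral_density : \int[kappa]_x (g x)%:E = 1.
Proof.
under eq_integral do rewrite -[g _]mulr1.
rewrite integral_density_mul // integral_cst // mul1e.
exact: probability_setT.
Qed.

Let measurable_pos : measurable_fun setT (fun x => (g x * h^\+ x)%:E).
Proof.
apply/measurable_EFinP; apply: measurable_funM => //.
exact: measurable_funrpos.
Qed.

Let measurable_neg : measurable_fun setT (fun x => (g x * h^\- x)%:E).
Proof.
apply/measurable_EFinP; apply: measurable_funM => //.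
exact: measurable_funrneg.
Qed.

Let integral_negpart_le1 : \int[kappa]_x (g x * h^\- x)%:E <= 1.
Proof.
rewrite -integral1; apply: ge0_le_integral => //.
- by move=> x _; rewrite lee_fin mulr_ge0.
- by move=> x _; rewrite lee_fin; exact: mul_ln_negpart_le1.
Qed.

Let integral_parts_le :
  1 + \int[kappa]_x (g x * h^\- x)%:E <= \int[kappa]_x (g x * h^\+ x)%:E + 1.
Proof.
rewrite -[in 1 + _]integral_density -[in _ + 1]integral1.
rewrite -!ge0_integralD //; last 4 first.
- by move=> x _; rewrite lee_fin mulr_ge0.
- by move=> x _; rewrite lee_fin.
- exact/measurable_EFinP.
- by move=> x _; rewrite lee_fin mulr_ge0.
apply: ge0_le_integral => //.
- by move=> x _; rewrite adde_ge0 ?lee_fin ?mulr_ge0.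
- apply: (emeasurable_funD (f := fun x => (g x)%:E)) measurable_neg.
  exact/measurable_EFinP.
- exact: (emeasurable_funD (f := fun x => _) measurable_pos).
- by move=> x _; rewrite -!EFinD lee_fin; exact: mul_ln_parts_le.
Qed.

Lemma KL_ge0_dominated : 0 <= KL eta kappa.
Proof.
rewrite KL_densityE integralE (funerpos h) (funerneg h).
rewrite -!integral_density_mul //; last 2 first.
- exact: measurable_funrneg.
- exact: measurable_funrpos.
have neg_fin : \int[kappa]_x (g x * h^\- x)%:E \is a fin_num.
  rewrite ge0_fin_numE ?(le_lt_trans integral_negpart_le1) ?ltey //.
  by apply: integral_ge0 => x _; rewrite lee_fin mulr_ge0.
rewrite sube_ge0 ?neg_fin // -(@leeD2lE _ 1) // [leRHS]addeC.
exact: integral_parts_le.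
Qed.

End KL_dominated.

Section KL_basics.
Variable R : realType.
Implicit Types eta kappa : probability R R.
Local Open Scope ereal_scope.

Lemma KL_ge0 eta kappa : 0 <= KL eta kappa.
Proof.
have [eta_kappa|not_dom] := pselect (eta `<< kappa).
  exact: KL_ge0_dominated.
by rewrite /KL; case: pselect.
Qed.

Lemma ereal_inf_KL_ge0 eta (S : set (probability R R)) :
  0 <= ereal_inf [set KL eta kappa | kappa in S].
Proof. by apply/ereal_infP => _ [kappa _ <-]; exact: KL_ge0. Qed.

Lemma KL_self eta : KL eta eta = 0.
Proof.
rewrite /KL; case: pselect => [eta_eta|]; last by case=> A.
have density1 :
    ae_eq eta setT (Radon_Nikodym (charge_of_finite_measure eta) eta) (cst 1).
  apply: integral_ae_eq => //; first exact: Radon_Nikodym_integrable.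
  by move=> E _ mE; rewrite integral_cst // mul1e -Radon_Nikodym_integral.
rewrite (ae_eq_integral (cst 0)) ?integral0 //.
- apply/measurable_EFinP; apply: measurableT_comp => //.
  by apply: measurableT_comp => //; exact: fine_measurable.
- by apply: filterS density1 => x dx /dx /= ->; rewrite ln1.
Qed.

End KL_basics.

Section moment_bound.
Context {R : realType} {eps B : R}.
Hypothesis eps_gt0 : 0 < eps.
Local Open Scope ereal_scope.

Let abs_le_1Dpow (x : R) : (`|x| <= 1 + `|x| `^ (1 + eps))%R.
Proof.
have [x_le1|x_gt1] := leP `|x|%R 1%R.
  by rewrite (le_trans x_le1) // lerDl powR_ge0.
have := @le1r_powR _ `|x|%R (1 + eps) (ltW x_gt1).
by rewrite lerDl (ltW eps_gt0) => /(_ isT); lra.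
Qed.

Lemma inL_integrable {eta : probability R R} : inL eps B eta ->
  eta.-integrable setT EFin.
Proof.
move=> eta_L; apply/integrableP; split; first exact/measurable_EFinP.
have mpow : measurable_fun setT (fun x : R => (`|x| `^ (1 + eps))%R).
  by apply: measurableT_comp (measurable_powR _) _; exact: normr_measurable.
apply: (@le_lt_trans _ _ (\int[eta]_x (cst 1 x + (`|x| `^ (1 + eps))%R%:E))).
  apply: ge0_le_integral => //.
  - by apply: measurableT_comp => //; exact: normr_measurable.
  - by apply: emeasurable_funD => //; exact/measurable_EFinP.
  - by move=> x _; rewrite /= -EFinD lee_fin.
rewrite ge0_integralD //; last exact/measurable_EFinP.
rewrite integral_cst // mul1e.
apply: le_lt_trans (leeD (probability_le1 _ _) eta_L) _ => //.
by rewrite -EFinD ltey.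
Qed.

Lemma cvar_fin_num (pi : R) {eta : probability R R} : inL eps B eta ->
  cvar pi eta \is a fin_num.
Proof.
move=> eta_L; rewrite /cvar fin_numD fin_numM //=.
apply: integrable_fin_num => //.
by apply: (integrableS measurableT) => //; exact: inL_integrable eta_L.
Qed.

End moment_bound.

Section ereal_inf_sum.
Variable R : realType.
Implicit Types (A C : set (\bar R)) (m : \bar R).
Local Open Scope ereal_scope.

Lemma le_ereal_infD m A C :
  (forall a, A a -> 0 <= a) -> (forall c, C c -> 0 <= c) ->
  (forall a c, A a -> C c -> m <= a + c) ->
  m <= ereal_inf A + ereal_inf C.
Proof.
move=> A_ge0 C_ge0 m_le.
have infA_ge0 : 0 <= ereal_inf A by exact/ereal_infP.
have infC_ge0 : 0 <= ereal_inf C by exact/ereal_infP.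
have [->|infA_fin] := eqVneq (ereal_inf A) +oo.
  by rewrite addye ?leey // gt_eqF // (lt_le_trans ltNy0 infC_ge0).
have [->|infC_fin] := eqVneq (ereal_inf C) +oo.
  by rewrite addey ?leey // gt_eqF // (lt_le_trans ltNy0 infA_ge0).
rewrite -ltey -ge0_fin_numE // in infA_fin.
rewrite -ltey -ge0_fin_numE // in infC_fin.
apply/lee_addgt0Pr => e e_gt0.
have e2_gt0 : (0 < e / 2)%R by rewrite divr_gt0.
have [a Aa a_lt] := lb_ereal_inf_adherent e2_gt0 infA_fin.
have [c Cc c_lt] := lb_ereal_inf_adherent e2_gt0 infC_fin.
apply: le_trans (m_le a c Aa Cc) _; apply/ltW.
by apply: lt_le_trans (lteD a_lt c_lt) _; rewrite addeACA -EFinD -splitr.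
Qed.

Lemma le_ereal_infZD m (s u : R) A C : (0 < s)%R -> (0 < u)%R ->
  (forall a, A a -> 0 <= a) -> (forall c, C c -> 0 <= c) ->
  (forall a c, A a -> C c -> m <= s%:E * a + u%:E * c) ->
  m <= s%:E * ereal_inf A + u%:E * ereal_inf C.
Proof.
move=> s_gt0 u_gt0 A_ge0 C_ge0 m_le; rewrite -!ereal_inf_pZl //.
apply: le_ereal_infD.
- by move=> _ [a Aa <-]; rewrite mule_ge0 ?lee_fin ?(ltW s_gt0) ?A_ge0.
- by move=> _ [c Cc <-]; rewrite mule_ge0 ?lee_fin ?(ltW u_gt0) ?C_ge0.
- by move=> _ _ [a Aa <-] [c Cc <-]; exact: m_le.
Qed.

End ereal_inf_sum.

Lemma inAc_witness {R : realType} [pi eps B : R] {K : nat} {j : 'I_K}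
    {nu : 'I_K -> probability R R} : inAc pi eps B j nu ->
  exists2 i, i != j & (cvar pi (nu i) <= cvar pi (nu j))%E.
Proof.
move=> [nu_M nu_notA]; apply: contrapT => no_i.
apply: nu_notA; split => // i ij; rewrite ltNge.
by apply/negP => le_ij; apply: no_i; exists i.
Qed.

Section two_arm_reduction.
Variables (R : realType) (pi eps B : R) (n : nat).
Variables (mu : 'I_n.+2 -> probability R R) (t : 'I_n.+2 -> R).
Hypothesis eps_gt0 : 0 < eps.
Hypothesis mu_A : inA pi eps B ord0 mu.
Hypothesis t_ge0 : forall a, 0 <= t a.
Local Open Scope ereal_scope.

Definition update_arms (j : 'I_n.+2) (k0 kj : probability R R) :
    'I_n.+2 -> probability R R :=
  fun a => if a == ord0 then k0 else if a == j then kj else mu a.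

Lemma weighted_KL_update_arms j k0 kj : j != ord0 ->
  \sum_(a < n.+2) (t a)%:E * KL (mu a) (update_arms j k0 kj a) =
  (t ord0)%:E * KL (mu ord0) k0 + (t j)%:E * KL (mu j) kj.
Proof.
move=> j0; rewrite (bigD1 ord0) //= (bigD1 j) //= /update_arms.
rewrite eqxx (negbTE j0) eqxx big1 ?adde0 //.
by move=> a /andP[/negbTE-> /negbTE->]; rewrite KL_self mule0.
Qed.

Lemma lhs_val_le_update_arms {j k0 kj} : j != ord0 ->
    inL eps B k0 -> inL eps B kj -> cvar pi kj <= cvar pi k0 ->
  lhs_val pi eps B mu t <=
  (t ord0)%:E * KL (mu ord0) k0 + (t j)%:E * KL (mu j) kj.
Proof.
move=> j0 k0_L kj_L kj_le_k0; rewrite -weighted_KL_update_arms //.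
apply: ereal_inf_lbound; exists (update_arms j k0 kj) => //; split.
  by move=> a; rewrite /update_arms; do 2 case: ifP => _ //; exact: mu_A.1.
move=> [_ /(_ j j0)]; rewrite /update_arms eqxx (negbTE j0) eqxx.
by rewrite ltNge kj_le_k0.
Qed.

Lemma lhs_val_le_KLinf j x y : j != ord0 -> (x <= y)%R ->
  lhs_val pi eps B mu t <=
  (t ord0)%:E * KLinfU pi eps B (mu ord0) y +
  (t j)%:E * KLinfL pi eps B (mu j) x.
Proof.
move=> j0 xy.
have KLinf_ge0 : 0 <= (t ord0)%:E * KLinfU pi eps B (mu ord0) y +
                      (t j)%:E * KLinfL pi eps B (mu j) x.
  by apply: adde_ge0; apply: mule_ge0; rewrite ?lee_fin ?t_ge0 //;
    exact: ereal_inf_KL_ge0.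
have [t00|t0_neq0] := eqVneq (t ord0) 0%R.
  apply: le_trans KLinf_ge0.
  have := lhs_val_le_update_arms j0 (mu_A.1 j) (mu_A.1 j) (lexx _).
  by rewrite t00 mul0e KL_self mule0 adde0.
have [tj0|tj_neq0] := eqVneq (t j) 0%R.
  apply: le_trans KLinf_ge0.
  have := lhs_val_le_update_arms j0 (mu_A.1 ord0) (mu_A.1 ord0) (lexx _).
  by rewrite tj0 mul0e KL_self mule0 add0e.
apply: le_ereal_infZD.
- by rewrite lt_def t0_neq0 t_ge0.
- by rewrite lt_def tj_neq0 t_ge0.
- by move=> _ [k _ <-]; exact: KL_ge0.
- by move=> _ [k _ <-]; exact: KL_ge0.
move=> _ _ [k0 [k0_L y_le_k0] <-] [kj [kj_L kj_le_x] <-].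
apply: lhs_val_le_update_arms => //.
by rewrite (le_trans kj_le_x) // (le_trans _ y_le_k0) // lee_fin.
Qed.

Lemma rhs_val_le_lhs_val : rhs_val pi eps B mu t <= lhs_val pi eps B mu t.
Proof.
apply/ereal_infP => _ [nu nu_Ac <-].
have [j j0 nuj_le_nu0] := inAc_witness nu_Ac.
have nu_L := nu_Ac.1.
pose x := fine (cvar pi (nu j)); pose y := fine (cvar pi (nu ord0)).
have xE : cvar pi (nu j) = x%:E.
  by rewrite fineK // (cvar_fin_num eps_gt0 pi (nu_L _)).
have yE : cvar pi (nu ord0) = y%:E.
  by rewrite fineK // (cvar_fin_num eps_gt0 pi (nu_L _)).
rewrite /rhs_val; apply: le_trans; first by apply: bigmin_le_cond; exact: j0.
apply: le_trans (ereal_inf_lbound _) _.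
  by exists (x, y); rewrite //= -lee_fin -xE -yE.
rewrite (bigD1 ord0) //= (bigD1 j) //= addeA.
apply: le_trans (leeDl _ _); last first.
  by apply: sume_ge0 => a _; rewrite mule_ge0 ?lee_fin ?KL_ge0.
apply: leeD; apply: lee_wpmul2l; rewrite ?lee_fin //; apply: ereal_inf_lbound.
- by exists (nu ord0) => //; split; rewrite ?yE.
- by exists (nu j) => //; split; rewrite ?xE.
Qed.

Lemma lhs_val_eq_rhs_val : lhs_val pi eps B mu t = rhs_val pi eps B mu t.
Proof.
apply/eqP; rewrite eq_le rhs_val_le_lhs_val andbT.
apply: le_bigmin => [|j j0]; first exact: leey.
by apply/ereal_infP => _ [[x y] /= xy <-]; exact: lhs_val_le_KLinf.
Qed.

End two_arm_reduction.

Theorem lemma2 (R : realType) (pi eps B : R) (n : nat)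
    (mu : 'I_n.+2 -> probability R R) :
  0 < pi < 1 -> 0 < eps -> 0 < B ->
  inA pi eps B ord0 mu ->
  (forall t : 'I_n.+2 -> R, simplex t ->
     lhs_val pi eps B mu t = rhs_val pi eps B mu t) /\
  ereal_sup [set lhs_val pi eps B mu t | t in [set t | simplex t]] =
  ereal_sup [set rhs_val pi eps B mu t | t in [set t | simplex t]].
Proof.
move=> _ eps_gt0 _ mu_A.
have lhs_rhs t : simplex t -> lhs_val pi eps B mu t = rhs_val pi eps B mu t.
  by move=> [t_ge0 _]; exact: lhs_val_eq_rhs_val.
by split => //; congr ereal_sup; apply: eq_imagel.
Qed.
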